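(* Let $m\ge3$ be odd and let $s=s(m)$. For every integer $n\ge1$ and every $x_0\in 2^n+2^{n+1}\mathbb{Z}_2$ (i.e. $v_2(x_0)=n$), one has $v_2\big(T_m(x_0)-x_0\big)=n+s$.
   Context: $v_2$ is the $2$-adic valuation on $\mathbb{Z}_2$. For an integer $m\ge0$, the $m$-th Chebyshev polynomial is $$T_m(x)=\sum_{k=0}^{\lfloor m/2\rfloor}(-1)^k\frac{m}{m-k}\binom{m-k}{k}2^{m-2k-1}x^{m-2k}.$$ For odd $m\ge3$, $s(m)=\max\{n\ge2:\ 2^n\mid(m+1)\text{ or }2^n\mid(m-1)\}$. *)

From HB Require Import structures.
From mathcomp Require Import all_boot all_order all_algebra.
Set Implicit Arguments. Unset Strict Implicit. Unset Printing Implicit Defensive.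
Import Order.TTheory GRing.Theory Num.Theory.
Local Open Scope ring_scope.

(* The rational coefficient m/(m-k) C(m-k,k) is an integer (for m >= 1), written
   as an exact nat division.  The formula is only used for odd m >= 3, where
   m-2k-1 >= 0 for all k <= m/2. *)
Definition chebT (m : nat) : {poly int} :=
  \sum_(k < (m./2).+1)
     (((-1) ^+ k * ((m * 'C(m - k, k)) %/ (m - k))%N%:Z * 2 ^+ (m - 2 * k - 1)%N)
        *: 'X^(m - 2 * k)).

(* The 2-adic integers Z_2 = lim Z/2^k Z, as coherent sequences of residues:
   z_k in [0, 2^k) is the residue of z mod 2^k and z_k = z_{k+1} mod 2^k. *)
Record Z2 := MkZ2 {
  z2res :> nat -> int;
  z2coh : forall k : nat, z2res k = (z2res k.+1 %% (2 ^+ k))%Z }.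

Definition v2_eq (z : Z2) (e : nat) : Prop := z e = 0 /\ z e.+1 <> 0.

Lemma horner_modz (p : {poly int}) (a d : int) :
  ((p.[(a %% d)%Z]) %% d)%Z = ((p.[a]) %% d)%Z.
Proof.
elim/poly_ind: p => [|p c IH]; first by rewrite !horner0.
rewrite !hornerMXaddC.
rewrite -[LHS]modzDml -[in LHS]modzMml IH modzMm.
by rewrite modzDml.
Qed.

Lemma modz_modX (x : int) (k : nat) :
  (((x %% (2 ^+ k.+1))%Z) %% (2 ^+ k))%Z = (x %% (2 ^+ k))%Z.
Proof.
apply/eqP; rewrite eqz_mod_dvd.
set q := (x %/ 2 ^+ k.+1)%Z; set r := (x %% 2 ^+ k.+1)%Z.
have -> : r - x = - (q * 2 ^+ k.+1).
  by rewrite [in X in _ - X](divz_eq x (2 ^+ k.+1)) -/q -/r opprD addrCA subrr addr0.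
by rewrite rpredN dvdz_mull // exprS dvdz_mull.
Qed.

Definition Z2_eval_res (p : {poly int}) (x : Z2) (k : nat) : int :=
  ((p.[x k]) %% (2 ^+ k))%Z.

Lemma Z2_eval_coh (p : {poly int}) (x : Z2) (k : nat) :
  Z2_eval_res p x k = (Z2_eval_res p x k.+1 %% (2 ^+ k))%Z.
Proof.
by rewrite /Z2_eval_res modz_modX (z2coh x k) horner_modz.
Qed.

Definition Z2_eval (p : {poly int}) (x : Z2) : Z2 :=
  MkZ2 (Z2_eval_coh p x).

Definition is_s (m s : nat) : Prop :=
  [/\ (2 <= s)%N, (2 ^ s %| m.+1)%N || (2 ^ s %| m.-1)%N
    & forall n : nat, (2 <= n)%N -> (2 ^ n %| m.+1)%N || (2 ^ n %| m.-1)%N ->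
        (n <= s)%N].

From HB Require Import structures.
From mathcomp Require Import all_boot all_order all_algebra.
From mathcomp Require Import zify ring.
Import GRing.Theory.

(* Write m = 2r+1.  In T_m(x) - x the linear coefficient is (-1)^r m - 1, that is
   -(m+1) or m-1 according to the parity of r, and its 2-adic valuation is exactly s.
   Every other monomial is (-1)^i c_i 2^(2j) x^(2j+1) with j = r-i in [1, r], where
   c_i (2j+1) = m C(r+j, 2j).  As C(r+j, 2j) (2j)! = (r+j)!/(r-j)! is divisible by
   r(r+1), and v_2((2j)!) < 2j, the factor 2^s divides c_i 2^(2j); hence for
   v_2(x) = n >= 1 these monomials have valuation at least n+s+1 and the linear
   term decides.  For x0 in Z_2 it suffices to apply this to the representative
   x0 mod 2^(n+s+1). *)

Set Implicit Arguments.
Unset Strict Implicit.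
Unset Printing Implicit Defensive.
Local Open Scope ring_scope.

Section TwoAdicBinomials.
Local Open Scope nat_scope.

Lemma logn2_odd k : logn 2 k.*2.+1 = 0.
Proof. by apply: logn_coprime; rewrite /coprime gcdnE /= -addn1 -muln2 modnMDl. Qed.

Lemma logn2_double k : 0 < k -> logn 2 k.*2 = (logn 2 k).+1.
Proof. by move=> k_gt0; rewrite -muln2 lognM // (pfactorK 1) // addn1. Qed.

Lemma logn2_fact_double k : logn 2 (k.*2)`! = k + logn 2 k`!.
Proof.
elim: k => [|k IHk] //.
rewrite doubleS !factS !lognM ?muln_gt0 ?fact_gt0 // logn2_odd IHk.
rewrite -doubleS logn2_double //; lia.
Qed.

Lemma logn2_fact_lt n : 0 < n -> logn 2 n`! < n.
Proof.
elim/ltn_ind: n => n IHn n_gt0.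
have IHk : 0 < n./2 -> logn 2 n./2`! < n./2.
  by apply: IHn; rewrite -[n in _ < n](odd_double_half n); lia.
rewrite -[n](odd_double_half n) in n_gt0 *.
case: (odd n) n_gt0 => /= n_gt0.
  rewrite factS lognM ?fact_gt0 // logn2_odd logn2_fact_double.
  by case: n./2 IHk => // k IHk; have := IHk isT; lia.
have k_gt0 : 0 < n./2 by rewrite add0n double_gt0 in n_gt0.
by rewrite logn2_fact_double; have := IHk k_gt0; lia.
Qed.

Lemma dvdn_mul_bin n k : n %| k * 'C(n, k).
Proof. by case: k => [|k]; rewrite ?mul0n ?dvdn0 // -mul_bin_diag dvdn_mulr. Qed.

Lemma dvdn_fact_fact m n : m <= n -> m`! %| n`!.
Proof. by move=> le_mn; rewrite (fact_split le_mn) dvdn_mulr. Qed.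

Lemma dvdn_bin_mul_fact r j : 0 < j <= r -> r * r.+1 %| 'C(r + j, j.*2) * (j.*2)`!.
Proof.
move=> /andP[j_gt0 le_jr].
have binE : 'C(r + j, j.*2) * (j.*2)`! * (r - j)`! = (r + j)`!.
  have -> : r - j = r + j - j.*2 by lia.
  by rewrite -mulnA bin_fact //; lia.
rewrite -(dvdn_pmul2r (fact_gt0 (r - j))) binE.
apply: (@dvdn_trans r.+1`!); last by apply: dvdn_fact_fact; lia.
case: r le_jr binE => [|r] le_jr _; first by lia.
rewrite [r.+2`!]factS factS mulnA [r.+2 * _]mulnC dvdn_mul //.
by apply: dvdn_fact_fact; lia.
Qed.

Definition chebc (m k : nat) : nat := (m * 'C(m - k, k)) %/ (m - k).

Lemma chebc_odd r j : j <= r ->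
  chebc r.*2.+1 (r - j) * j.*2.+1 = r.*2.+1 * 'C(r + j, j.*2).
Proof.
move=> le_jr; rewrite /chebc; set N := (r + j).+1.
have -> : r.*2.+1 - (r - j) = N by rewrite /N; lia.
have CE : 'C(N, r - j) = 'C(N, j.*2.+1).
  by rewrite -bin_sub /N; [congr 'C(_, _) | ]; lia.
have dvdN : N %| r.*2.+1 * 'C(N, r - j).
  have -> : r.*2.+1 = N + (r - j) by rewrite /N; lia.
  by rewrite mulnDl dvdn_add ?dvdn_mul_bin ?dvdn_mulr.
rewrite divn_mulAC // CE -mulnA [_ * j.*2.+1]mulnC -mul_bin_diag.
by rewrite mulnCA mulKn.
Qed.

(* For m = 2r+1 the hypothesis says 2^(s+1) | m^2 - 1 = 4 r (r+1). *)
Lemma dvdn_chebc_odd r j s : 0 < j <= r -> 2 ^ s %| (r * r.+1).*2 ->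
  2 ^ s %| chebc r.*2.+1 (r - j) * 2 ^ j.*2.
Proof.
move=> jr dvd_s; have /andP[j_gt0 le_jr] := jr.
set a := chebc _ _; set C := 'C(r + j, j.*2).
have E := chebc_odd le_jr; rewrite -/a -/C in E.
have C_gt0 : 0 < C by rewrite bin_gt0; lia.
have : 0 < a * j.*2.+1 by rewrite E muln_gt0 C_gt0.
rewrite muln_gt0 => /andP[a_gt0 _].
have logaC : logn 2 a = logn 2 C.
  have := congr1 (logn 2) E.
  by rewrite !lognM ?muln_gt0 ?C_gt0 ?a_gt0 // !logn2_odd addn0.
have rr_gt0 : 0 < r * r.+1 by rewrite muln_gt0; lia.
have le_log : logn 2 (r * r.+1) <= logn 2 (C * (j.*2)`!).
  by apply: dvdn_leq_log (dvdn_bin_mul_fact jr); rewrite muln_gt0 C_gt0 fact_gt0.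
rewrite [X in _ <= X]lognM ?fact_gt0 // in le_log.
have lt_fact : logn 2 (j.*2)`! < j.*2 by rewrite logn2_fact_lt ?double_gt0.
rewrite pfactor_dvdn ?double_gt0 // logn2_double // in dvd_s.
rewrite pfactor_dvdn ?muln_gt0 ?a_gt0 ?expn_gt0 // lognM ?expn_gt0 // pfactorK // logaC.
lia.
Qed.

End TwoAdicBinomials.

Definition v2z_eq (z : int) (e : nat) : bool :=
  (2 ^+ e %| z)%Z && ~~ (2 ^+ e.+1 %| z)%Z.

Lemma dvdz_pow2 (e : nat) (z : int) : (2 ^+ e %| z)%Z = (2 ^ e %| `|z|)%N.
Proof. by rewrite dvdzE abszX. Qed.

Lemma v2z_eqE z e : v2z_eq z e = (z != 0) && (logn 2 `|z| == e).
Proof.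
rewrite /v2z_eq !dvdz_pow2; have [-> | z_neq0] := eqVneq z 0; first by rewrite !dvdn0.
by rewrite !pfactor_dvdn ?absz_gt0 // ltnNge negbK eq_sym eqn_leq.
Qed.

Lemma v2z_eq_nat (c e : nat) :
  v2z_eq c%:Z e = (2 ^ e %| c)%N && ~~ (2 ^ e.+1 %| c)%N.
Proof. by rewrite /v2z_eq !dvdz_pow2. Qed.

Lemma v2z_eqN z e : v2z_eq (- z) e = v2z_eq z e.
Proof. by rewrite /v2z_eq !dvdzE abszN. Qed.

Lemma v2z_eqM a b e f : v2z_eq a e -> v2z_eq b f -> v2z_eq (a * b) (e + f).
Proof.
rewrite !v2z_eqE => /andP[a_neq0 /eqP <-] /andP[b_neq0 /eqP <-].
by rewrite mulf_eq0 negb_or a_neq0 b_neq0 abszM lognM ?absz_gt0 ?eqxx.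
Qed.

Lemma v2z_eqDr a b e : v2z_eq a e -> (2 ^+ e.+1 %| b)%Z -> v2z_eq (a + b) e.
Proof.
move=> /andP[dvd_a ndvd_a] dvd_b; apply/andP; split.
  by rewrite rpredD // (dvdz_trans (dvdz_exp2l 2 (leqnSn e))).
by apply: contra ndvd_a => dvd_ab; rewrite -(addrK b a) rpredB.
Qed.

Lemma v2z_eq_sign_odd_sub1 r s :
  is_s r.*2.+1 s -> v2z_eq ((-1) ^+ r * (r.*2.+1)%:Z - 1) s.
Proof.
case=> s_ge2 dvd_s s_max.
have ndvd_s1 c : (c == r.*2.+2) || (c == r.*2) -> ~~ (2 ^ s.+1 %| c)%N.
  move=> /orP hc; apply/negP => dvd_c.
  have := s_max s.+1 (leq_trans s_ge2 (leqnSn s)).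
  by case: hc => /eqP <-; rewrite dvd_c ?orbT ltnn => /(_ isT).
have ndvd_s k : odd k -> ~~ (2 ^ s %| k.*2)%N.
  move=> odd_k; apply: contraL odd_k => /(dvdn_trans (dvdn_exp2l 2 s_ge2)).
  by rewrite -muln2 (_ : 2 ^ 2 = 2 * 2)%N // dvdn_pmul2r // dvdn2.
rewrite -signr_odd; case: (boolP (odd r)) => [odd_r | even_r].
  have -> : (-1) ^+ true * (r.*2.+1)%:Z - 1 = - (r.*2.+2)%:Z.
    by rewrite -[(r.*2.+2)%N]addn1 PoszD; ring.
  rewrite v2z_eqN v2z_eq_nat ndvd_s1 ?eqxx // andbT.
  by move: dvd_s; rewrite /= (negbTE (ndvd_s r odd_r)) orbF.
have -> : (-1) ^+ false * (r.*2.+1)%:Z - 1 = (r.*2)%:Z.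
  by rewrite -[(r.*2.+1)%N]addn1 PoszD; ring.
rewrite v2z_eq_nat ndvd_s1 ?eqxx ?orbT // andbT.
by move: dvd_s; rewrite /= -doubleS (negbTE (ndvd_s r.+1 _)).
Qed.

Definition chebT_term (r : nat) (x : int) (i : nat) : int :=
  (-1) ^+ i * (chebc r.*2.+1 i)%:Z * 2 ^+ (r - i).*2 * x ^+ (r - i).*2.+1.

Lemma horner_chebT_odd r x : (chebT r.*2.+1).[x] =
  \sum_(i < r) chebT_term r x i + (-1) ^+ r * (r.*2.+1)%:Z * x.
Proof.
rewrite /chebT horner_sum (half_bit_double r true) big_ord_recr /=.
congr (_ + _).
  apply: eq_bigr => i _; rewrite hornerZ hornerXn /chebT_term /chebc.
  have lt_ir := ltn_ord i.
  have [-> ->] : (r.*2.+1 - 2 * i - 1 = (r - i).*2 /\ r.*2.+1 - 2 * i = (r - i).*2.+1)%N.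
    by split; lia.
  done.
rewrite hornerZ hornerXn.
have [-> ->] : (r.*2.+1 - 2 * r = 1 /\ r.*2.+1 - r = r.+1)%N by split; lia.
by rewrite subnn expr0 mulr1 expr1 binSn mulnK.
Qed.

Lemma dvdz_pow2_monomial (c x : int) (s n e : nat) :
  (2 ^+ s %| c)%Z -> (2 ^+ n %| x)%Z -> (0 < n)%N -> (0 < e)%N ->
  (2 ^+ (n + s).+1 %| c * x ^+ e.+1)%Z.
Proof.
move=> dvd_c dvd_x n_gt0 e_gt0.
apply: dvdz_trans (dvdz_mul dvd_c (dvdz_exp2r e.+1 dvd_x)).
by rewrite -exprM -exprD dvdz_exp2l //; nia.
Qed.

Lemma dvdz_chebT_term r s n x i : (i < r)%N -> (2 ^ s %| (r * r.+1).*2)%N ->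
  (0 < n)%N -> (2 ^+ n %| x)%Z -> (2 ^+ (n + s).+1 %| chebT_term r x i)%Z.
Proof.
move=> lt_ir dvd_s n_gt0 dvd_x; apply: dvdz_pow2_monomial => //; last by lia.
rewrite -mulrA dvdz_pow2 abszMsign abszM abszX /=.
have := @dvdn_chebc_odd r (r - i) s _ dvd_s.
by rewrite subKn ?(ltnW lt_ir) //; apply; lia.
Qed.

Lemma v2z_eq_chebT_subX m s n x : odd m -> is_s m s -> (0 < n)%N ->
  v2z_eq x n -> v2z_eq (chebT m - 'X).[x] (n + s).
Proof.
move=> odd_m hs n_gt0 x_n.
have [r m_eq] : exists r, m = r.*2.+1.
  by exists m./2; rewrite -[LHS]odd_double_half odd_m.
subst m; have dvd_rr : (2 ^ s %| (r * r.+1).*2)%N.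
  case: hs => _ /orP[dvd_s | dvd_s] _.
    by rewrite doubleMr doubleS dvdn_mull.
  by rewrite doubleMl dvdn_mulr.
rewrite hornerD hornerN hornerX horner_chebT_odd.
set S := \sum_(i < r) _; set c := (-1) ^+ r * _.
have -> : S + c * x - x = (c - 1) * x + S by ring.
apply: v2z_eqDr; first by rewrite addnC; exact: v2z_eqM (v2z_eq_sign_odd_sub1 hs) x_n.
apply: rpred_sum => i _; apply: dvdz_chebT_term => //.
by case/andP: x_n.
Qed.

Lemma modz_dvdm (d m x : int) : (d %| m)%Z -> ((x %% m)%Z %% d)%Z = (x %% d)%Z.
Proof.
move=> dvd_dm; apply/eqP; rewrite eqz_mod_dvd {2}(divz_eq x m).
by rewrite opprD addrCA subrr addr0 rpredN dvdz_mull.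
Qed.

Lemma v2z_eq_modz z e k : (e < k)%N -> v2z_eq (z %% 2 ^+ k)%Z e = v2z_eq z e.
Proof.
move=> lt_ek.
have dvd_mod d : (d %| 2 ^+ k)%Z -> (d %| z %% 2 ^+ k)%Z = (d %| z)%Z.
  by move=> dvd_d; apply/idP/idP => /dvdz_mod0P h; apply/dvdz_mod0P; rewrite modz_dvdm in h *.
by rewrite /v2z_eq !dvd_mod ?dvdz_exp2l // ltnW.
Qed.

Lemma Z2_resK (x : Z2) n k : (n <= k)%N -> (x k %% 2 ^+ n)%Z = x n.
Proof.
move=> /subnKC <-; elim: (k - n)%N => [|i IHi].
  by rewrite addn0 {1}(z2coh x n) modz_mod -z2coh.
by rewrite addnS -(modz_dvdm _ (dvdz_exp2l 2 (leq_addr i n))) -z2coh.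
Qed.

Lemma v2_eqP (y : Z2) e : v2_eq y e <-> v2z_eq (y e.+1) e.
Proof.
split=> [[y_e y_e1] | /andP[dvd_e ndvd_e1]].
  apply/andP; split; first by apply/dvdz_mod0P; rewrite -z2coh.
  by apply: contra_notN y_e1 => /dvdz_mod0P; rewrite Z2_resK.
split; first by rewrite (z2coh y e); apply/dvdz_mod0P.
by move=> y_e1; rewrite y_e1 dvdz0 in ndvd_e1.
Qed.

Lemma v2_eq_res (x : Z2) n k : v2_eq x n -> (n < k)%N -> v2z_eq (x k) n.
Proof. by move=> /v2_eqP x_n lt_nk; rewrite -(Z2_resK x lt_nk) v2z_eq_modz in x_n. Qed.

Theorem mainTheorem5 (m s : nat) :
  (3 <= m)%N -> odd m -> is_s m s ->
  forall (n : nat) (x0 : Z2), (1 <= n)%N -> v2_eq x0 n ->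
    v2_eq (Z2_eval (chebT m - 'X) x0) (n + s).
Proof.
move=> _ odd_m hs n x0 n_gt0 x0_n.
apply/v2_eqP; rewrite /= /Z2_eval_res v2z_eq_modz //.
apply: v2z_eq_chebT_subX => //.
by apply: v2_eq_res x0_n _; rewrite ltnS leq_addr.
Qed.
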